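(* Let $u$ be a sufficiently regular function and $H=(H^{\alpha\beta})$ a sufficiently regular symmetric 2-tensor field on $\mathcal{K}_{[s_0,s_1]}$. Let $I$ be a multi-index with values in $\{0,1,2\}$, $J$ a multi-index with values in $\{1,2\}$, $p=|I|+|J|$, $k=|J|$. Then, with a constant $C$ determined by $I,J$, $$\big|[\partial^IL^J,\underline{H}^{00}\partial_t\partial_t]u\big|\le C\!\!\!\sum_{|I_1|+|I_2|\le|I|,\ |J_1|+|J_2|\le|J|\atop |I_2|+|J_2|\ge1}\!\!\!|\partial^{I_2}L^{J_2}\underline{H}^{00}|\,|\partial_t\partial_t\partial^{I_1}L^{J_1}u|+C|\underline{H}^{00}|\sum_{0\le|J'|<|J|}|\partial_t\partial_t\partial^IL^{J'}u|$$ $$+Ct^{-1}\sum_{p_1+p_2\le p,\ p_1<p\atop k_1+k_2\le k}|\underline{H}^{00}|_{p_2,k_2}|\partial u|_{p_1+1,k_1+1}+Ct^{-1}|\underline{H}^{00}|\,|\partial u|_{p,k},$$ where $[\partial^IL^J,\underline{H}^{00}\partial_t\partial_t]u:=\partial^IL^J(\underline{H}^{00}\partial_t\partial_tu)-\underline{H}^{00}\partial_t\partial_t\partial^IL^Ju$.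
   Context: Coordinates $(t,x)=(x^0,x^1,x^2)$, $r=|x|$, $\partial_0=\partial_t$, summation over repeated indices. $\mathcal{K}_{[s_0,s_1]}=\{(t,x): t>r+1,\ s_0^2\le t^2-r^2\le s_1^2\}$. Boosts $L_a=x^a\partial_t+t\partial_a$; $\partial^I=\partial_{i_1}\cdots\partial_{i_m}$, $L^J=L_{j_1}\cdots L_{j_n}$. $\underline{H}^{00}:=H^{00}-2(x^a/t)H^{a0}+(x^ax^b/t^2)H^{ab}$. For a function $w$: $|w|_{p,k}:=\max|Z^Kw|$ over all operators $Z^K$ that are compositions, in any order, of $i$ partial derivatives $\partial_\alpha$ and $j$ boosts $L_a$ with $i+j\le p$, $j\le k$; $|\partial w|_{p,k}:=\max_\alpha|\partial_\alpha w|_{p,k}$. *)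

From Stdlib Require Import Reals List.
From Coquelicot Require Import Coquelicot.
Import ListNotations.
Open Scope R_scope.

(* Functions of (t, x^1, x^2). *)
Definition fn := R -> R -> R -> R.

Inductive idx3 := D0 | D1 | D2.
Inductive idx2 := B1 | B2.

Definition all_idx3 : list idx3 := [D0; D1; D2].
Definition all_idx2 : list idx2 := [B1; B2].

Definition pd (a : idx3) (w : fn) : fn :=
  match a with
  | D0 => fun t x y => Derive (fun s => w s x y) t
  | D1 => fun t x y => Derive (fun s => w t s y) x
  | D2 => fun t x y => Derive (fun s => w t x s) y
  end.

Definition idx_of (b : idx2) : idx3 := match b with B1 => D1 | B2 => D2 end.

Definition coord (b : idx2) (t x y : R) : R := match b with B1 => x | B2 => y end.

Definition boost (b : idx2) (w : fn) : fn :=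
  fun t x y => coord b t x y * pd D0 w t x y + t * pd (idx_of b) w t x y.

Definition pdI (I : list idx3) (w : fn) : fn := fold_right pd w I.
Definition LJ (J : list idx2) (w : fn) : fn := fold_right boost w J.

Definition dtt (w : fn) : fn := pd D0 (pd D0 w).

(* general operators Z^K : compositions of ∂_α and L_a in any order *)
Inductive zop := Zd (a : idx3) | ZL (b : idx2).
Definition apply_zop (z : zop) (w : fn) : fn :=
  match z with Zd a => pd a w | ZL b => boost b w end.
Definition applyZ (K : list zop) (w : fn) : fn := fold_right apply_zop w K.
Definition isL (z : zop) : bool := match z with Zd _ => false | ZL _ => true end.
Definition numL (K : list zop) : nat := length (filter isL K).
Definition all_zop : list zop := map Zd all_idx3 ++ map ZL all_idx2.

Fixpoint lists_len {A : Type} (xs : list A) (n : nat) : list (list A) :=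
  match n with
  | O => [[]]
  | S m => flat_map (fun l => map (fun a => a :: l) xs) (lists_len xs m)
  end.
Definition lists_upto {A : Type} (xs : list A) (n : nat) : list (list A) :=
  flat_map (lists_len xs) (seq 0 (S n)).

Definition sumR (l : list R) : R := fold_right Rplus 0 l.

(* |w|_{p,k} at a point: max |Z^K w| over Z^K with i+j <= p, j <= k *)
Definition normpk (p k : nat) (w : fn) (t x y : R) : R :=
  fold_right Rmax 0
    (map (fun K => Rabs (applyZ K w t x y))
       (filter (fun K => Nat.leb (numL K) k) (lists_upto all_zop p))).

Definition normd (p k : nat) (w : fn) (t x y : R) : R :=
  Rmax (normpk p k (pd D0 w) t x y)
       (Rmax (normpk p k (pd D1 w) t x y) (normpk p k (pd D2 w) t x y)).

Definition Hbar00 (H : idx3 -> idx3 -> fn) : fn :=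
  fun t x y =>
    H D0 D0 t x y
    - 2 * sumR (map (fun a => coord a t x y / t * H (idx_of a) D0 t x y) all_idx2)
    + sumR (flat_map (fun a => map (fun b =>
          coord a t x y * coord b t x y / (t ^ 2) * H (idx_of a) (idx_of b) t x y)
          all_idx2) all_idx2).

Definition rad (x y : R) : R := sqrt (x ^ 2 + y ^ 2).
Definition inK (s0 s1 t x y : R) : Prop :=
  t > rad x y + 1 /\ s0 ^ 2 <= t ^ 2 - (rad x y) ^ 2 /\ t ^ 2 - (rad x y) ^ 2 <= s1 ^ 2.

Definition open3 (U : R -> R -> R -> Prop) : Prop :=
  forall t x y, U t x y -> exists eps, 0 < eps /\
    forall t' x' y', Rabs (t' - t) < eps -> Rabs (x' - x) < eps -> Rabs (y' - y) < eps ->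
      U t' x' y'.

Definition cont3_at (g : fn) (t x y : R) : Prop :=
  forall e, 0 < e -> exists d, 0 < d /\
    forall t' x' y', Rabs (t' - t) < d -> Rabs (x' - x) < d -> Rabs (y' - y) < d ->
      Rabs (g t' x' y' - g t x y) < e.

Definition smooth_on (U : R -> R -> R -> Prop) (w : fn) : Prop :=
  forall (l : list idx3) t x y, U t x y ->
    let g := pdI l w in
    cont3_at g t x y /\
    ex_derive (fun s => g s x y) t /\
    ex_derive (fun s => g t s y) x /\
    ex_derive (fun s => g t x s) y.

Definition comm (I : list idx3) (J : list idx2) (Hb u : fn) : fn :=
  fun t x y =>
    pdI I (LJ J (fun t' x' y' => Hb t' x' y' * dtt u t' x' y')) t x y
    - Hb t x y * dtt (pdI I (LJ J u)) t x y.

Definition rhs1 (I : list idx3) (J : list idx2) (Hb u : fn) (t x y : R) : R :=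
  let nI := length I in let nJ := length J in
  sumR (map (fun q : list idx3 * list idx3 * list idx2 * list idx2 =>
      let '(I1, I2, J1, J2) := q in
      Rabs (pdI I2 (LJ J2 Hb) t x y) * Rabs (dtt (pdI I1 (LJ J1 u)) t x y))
    (filter (fun q : list idx3 * list idx3 * list idx2 * list idx2 =>
        let '(I1, I2, J1, J2) := q in
        Nat.leb (length I1 + length I2) nI && Nat.leb (length J1 + length J2) nJ
        && Nat.leb 1 (length I2 + length J2))%bool
      (list_prod (list_prod (list_prod (lists_upto all_idx3 nI) (lists_upto all_idx3 nI))
                  (lists_upto all_idx2 nJ)) (lists_upto all_idx2 nJ)))).

Definition rhs2 (I : list idx3) (J : list idx2) (u : fn) (t x y : R) : R :=
  sumR (map (fun J' => Rabs (dtt (pdI I (LJ J' u)) t x y))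
    (filter (fun J' => Nat.ltb (length J') (length J)) (lists_upto all_idx2 (length J)))).

Definition rhs3 (p k : nat) (Hb u : fn) (t x y : R) : R :=
  sumR (flat_map (fun p1 => flat_map (fun p2 => flat_map (fun k1 => map (fun k2 =>
      normpk p2 k2 Hb t x y * normd (p1 + 1) (k1 + 1) u t x y)
      (filter (fun k2 => Nat.leb (k1 + k2) k) (seq 0 (S k))))
      (seq 0 (S k)))
      (filter (fun p2 => Nat.leb (p1 + p2) p) (seq 0 (S p))))
    (seq 0 p)).

(* Write Z^K = ∂^I L^J.  The commutator splits as
     [Z^K, Hb] ∂_t∂_t u + Hb [Z^K, ∂_t∂_t] u.
   By the Leibniz rule the first part is a sum of products (Z^A Hb)(Z^B ∂_t∂_t u) over the
   splittings of K in which at least one vector field hits Hb.  Since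
   [∂_a, L_b] = δ_ab ∂_t + δ_a0 ∂_b, the second part is a combination of second derivatives
   ∂∂ ∂^I L^J' u with |J'| < |J|, and so is Z^B ∂_t∂_t u - ∂_t∂_t Z^B u.  Finally, in the
   cone |x| <= t the identity t ∂_a = L_a - x^a ∂_t bounds every second derivative of w by
   |∂_t∂_t w| + C t^-1 (|∂ w| + |∂ L w|), and the first derivatives of Z^K u are controlled
   by |∂u|_{p,k}.  Keeping track of the l^1 size of all these linear combinations gives C. *)

From Pilot Require Import Defs.
From Stdlib Require Import Reals List Lra Lia.
From Coquelicot Require Import Coquelicot.
Import ListNotations.
Open Scope R_scope.

Definition fadd (f g : fn) : fn := fun t x y => f t x y + g t x y.
Definition fsub (f g : fn) : fn := fun t x y => f t x y - g t x y.
Definition fmul (f g : fn) : fn := fun t x y => f t x y * g t x y.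
Definition fscal (c : R) (f : fn) : fn := fun t x y => c * f t x y.
Definition fconst (c : R) : fn := fun _ _ _ => c.
Definition ftime : fn := fun t _ _ => t.
Definition frecip_time : fn := fun t _ _ => / t.

(** * Continuity in three variables *)

Lemma cont3_at_const c t x y : cont3_at (fconst c) t x y.
Proof.
  intros e he; exists 1; split; [lra|]; intros.
  unfold fconst; rewrite Rminus_diag, Rabs_R0; exact he.
Qed.

Lemma cont3_at_time t x y : cont3_at ftime t x y.
Proof. intros e he; exists e; split; auto. Qed.

Lemma cont3_at_coord b t x y : cont3_at (coord b) t x y.
Proof. intros e he; exists e; split; auto; destruct b; simpl; auto. Qed.

Lemma cont3_at_common f g t x y : cont3_at f t x y -> cont3_at g t x y ->
  forall e, 0 < e -> exists d, 0 < d /\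
    forall t' x' y', Rabs (t' - t) < d -> Rabs (x' - x) < d -> Rabs (y' - y) < d ->
      Rabs (f t' x' y' - f t x y) < e /\ Rabs (g t' x' y' - g t x y) < e.
Proof.
  intros Hf Hg e he.
  destruct (Hf e he) as [d1 [hd1 H1]], (Hg e he) as [d2 [hd2 H2]].
  exists (Rmin d1 d2); split; [apply Rmin_glb_lt; auto|].
  intros t' x' y' ht hx hy.
  pose proof (Rmin_l d1 d2); pose proof (Rmin_r d1 d2).
  split; [apply H1 | apply H2]; lra.
Qed.

Lemma cont3_at_add f g t x y :
  cont3_at f t x y -> cont3_at g t x y -> cont3_at (fadd f g) t x y.
Proof.
  intros Hf Hg e he.
  destruct (cont3_at_common f g t x y Hf Hg (e / 2)) as [d [hd Hd]]; [lra|].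
  exists d; split; auto; intros t' x' y' ht hx hy.
  destruct (Hd t' x' y' ht hx hy) as [Ef Eg]; unfold fadd.
  replace (f t' x' y' + g t' x' y' - (f t x y + g t x y))
    with ((f t' x' y' - f t x y) + (g t' x' y' - g t x y)) by ring.
  eapply Rle_lt_trans; [apply Rabs_triang | lra].
Qed.

Lemma cont3_at_mul f g t x y :
  cont3_at f t x y -> cont3_at g t x y -> cont3_at (fmul f g) t x y.
Proof.
  intros Hf Hg e he.
  set (A := Rabs (f t x y)); set (B := Rabs (g t x y)).
  assert (hA : 0 <= A) by apply Rabs_pos; assert (hB : 0 <= B) by apply Rabs_pos.
  set (eta := Rmin 1 (e / (A + B + 2))).
  assert (heta : 0 < eta) by (apply Rmin_glb_lt; [lra | apply Rdiv_lt_0_compat; lra]).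
  assert (eta_le1 : eta <= 1) by apply Rmin_l.
  assert (eta_small : eta * (A + B + 2) <= e).
  { assert (eta <= e / (A + B + 2)) by apply Rmin_r.
    apply Rle_trans with (e / (A + B + 2) * (A + B + 2)).
    - apply Rmult_le_compat_r; lra.
    - right; field; lra. }
  destruct (cont3_at_common f g t x y Hf Hg eta heta) as [d [hd Hd]].
  exists d; split; auto; intros t' x' y' ht hx hy.
  destruct (Hd t' x' y' ht hx hy) as [Ef Eg]; unfold fmul.
  set (a := f t' x' y' - f t x y) in Ef; set (b := g t' x' y' - g t x y) in Eg.
  replace (f t' x' y' * g t' x' y' - f t x y * g t x y)
    with (a * b + a * g t x y + f t x y * b) by (unfold a, b; ring).
  assert (Htri : Rabs (a * b + a * g t x y + f t x y * b)
          <= Rabs (a * b) + Rabs (a * g t x y) + Rabs (f t x y * b)).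
  { eapply Rle_trans; [apply Rabs_triang|]. apply Rplus_le_compat_r, Rabs_triang. }
  rewrite !Rabs_mult in Htri; fold A B in Htri.
  pose proof (Rabs_pos a); pose proof (Rabs_pos b).
  nra.
Qed.

Lemma cont3_at_of_ex_derive_time (h : R -> R) t x y :
  ex_derive h t -> cont3_at (fun s _ _ => h s) t x y.
Proof.
  intros Hd e he.
  destruct (proj1 (filterlim_locally h (h t)) (ex_derive_continuous h t Hd) (mkposreal e he))
    as [d Hd'].
  exists d; split; [apply cond_pos|]. intros t' x' y' ht _ _. exact (Hd' t' ht).
Qed.

(** * Words in the vector fields and the sums of the estimate *)

Lemma In_lists_len {A : Type} (xs : list A) n l :
  length l = n -> (forall a, In a l -> In a xs) -> In l (lists_len xs n).
Proof.
  revert l; induction n; intros l hl hx.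
  - destruct l; simpl in *; [auto | lia].
  - destruct l as [|a l]; simpl in hl; [lia|]; simpl; apply in_flat_map.
    exists l; split; [apply IHn; [lia | intros b hb; apply hx; simpl; auto]|].
    apply (in_map (fun a0 => a0 :: l)), hx; simpl; auto.
Qed.

Lemma In_lists_upto {A : Type} (xs : list A) n l :
  (length l <= n)%nat -> (forall a, In a l -> In a xs) -> In l (lists_upto xs n).
Proof.
  intros hl hx; apply in_flat_map; exists (length l).
  split; [apply in_seq; lia | apply In_lists_len; auto].
Qed.

Lemma In_all_zop z : In z all_zop.
Proof. destruct z as [[| |] | [|]]; simpl; tauto. Qed.

Lemma In_all_idx3 a : In a all_idx3.
Proof. destruct a; simpl; tauto. Qed.

Lemma In_all_idx2 b : In b all_idx2.
Proof. destruct b; simpl; tauto. Qed.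

Lemma idx3_cases a : a = D0 \/ exists b, a = idx_of b.
Proof. destruct a; [left | right; exists Defs.B1 | right; exists Defs.B2]; reflexivity. Qed.

Lemma fold_Rmax_ge l a : In a l -> a <= fold_right Rmax 0 l.
Proof.
  induction l as [|c l IH]; simpl; [tauto|]; intros [-> | h]; [apply Rmax_l|].
  eapply Rle_trans; [apply IH; auto | apply Rmax_r].
Qed.

Lemma fold_Rmax_nonneg l : 0 <= fold_right Rmax 0 l.
Proof. induction l; simpl; [lra | eapply Rle_trans; [eassumption | apply Rmax_r]]. Qed.

Lemma sumR_nonneg l : (forall b, In b l -> 0 <= b) -> 0 <= sumR l.
Proof.
  induction l as [|c l IH]; simpl; intros hp; [lra|].
  pose proof (hp c (or_introl eq_refl)); pose proof (IH (fun b hb => hp b (or_intror hb))); lra.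
Qed.

Lemma sumR_ge l a : In a l -> (forall b, In b l -> 0 <= b) -> a <= sumR l.
Proof.
  induction l as [|c l IH]; simpl; [tauto|]; intros ha hp.
  pose proof (hp c (or_introl eq_refl)).
  pose proof (sumR_nonneg l (fun b hb => hp b (or_intror hb))).
  destruct ha as [-> | ha]; [lra|].
  pose proof (IH ha (fun b hb => hp b (or_intror hb))); lra.
Qed.

Lemma sumR_map_nonneg {A : Type} (f : A -> R) l : (forall a, 0 <= f a) -> 0 <= sumR (map f l).
Proof. intros hf; apply sumR_nonneg; intros b hb; apply in_map_iff in hb as [a [<- _]]; auto. Qed.

Lemma sumR_map_ge {A : Type} (f : A -> R) l a :
  In a l -> (forall a, 0 <= f a) -> f a <= sumR (map f l).
Proof.
  intros ha hf; apply sumR_ge; [apply in_map; exact ha|].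
  intros b hb; apply in_map_iff in hb as [a' [<- _]]; auto.
Qed.

Lemma normpk_ge p k w K t x y : (length K <= p)%nat -> (numL K <= k)%nat ->
  Rabs (applyZ K w t x y) <= normpk p k w t x y.
Proof.
  intros hp hk; apply fold_Rmax_ge, (in_map (fun K0 => Rabs (applyZ K0 w t x y))).
  apply filter_In; split; [apply In_lists_upto; auto using In_all_zop | apply Nat.leb_le; auto].
Qed.

Lemma normpk_nonneg p k w t x y : 0 <= normpk p k w t x y.
Proof. apply fold_Rmax_nonneg. Qed.

Lemma normd_ge p k u K a t x y : (length K <= p)%nat -> (numL K <= k)%nat ->
  Rabs (applyZ K (pd a u) t x y) <= normd p k u t x y.
Proof.
  intros hp hk; pose proof (normpk_ge p k (pd a u) K t x y hp hk); unfold normd.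
  pose proof (Rmax_l (normpk p k (pd D1 u) t x y) (normpk p k (pd D2 u) t x y)).
  pose proof (Rmax_r (normpk p k (pd D1 u) t x y) (normpk p k (pd D2 u) t x y)).
  pose proof (Rmax_l (normpk p k (pd D0 u) t x y)
                     (Rmax (normpk p k (pd D1 u) t x y) (normpk p k (pd D2 u) t x y))).
  pose proof (Rmax_r (normpk p k (pd D0 u) t x y)
                     (Rmax (normpk p k (pd D1 u) t x y) (normpk p k (pd D2 u) t x y))).
  destruct a; lra.
Qed.

Lemma normd_nonneg p k u t x y : 0 <= normd p k u t x y.
Proof. eapply Rle_trans; [apply normpk_nonneg | apply Rmax_l]. Qed.

Lemma applyZ_app K1 K2 w : applyZ (K1 ++ K2) w = applyZ K1 (applyZ K2 w).
Proof. apply fold_right_app. Qed.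

Lemma applyZ_Zd I w : applyZ (map Zd I) w = pdI I w.
Proof. induction I; simpl; congruence. Qed.

Lemma applyZ_ZL J w : applyZ (map ZL J) w = LJ J w.
Proof. induction J; simpl; congruence. Qed.

Lemma applyZ_IJ I J w : applyZ (map Zd I ++ map ZL J) w = pdI I (LJ J w).
Proof. rewrite applyZ_app, applyZ_Zd, applyZ_ZL; reflexivity. Qed.

Lemma length_IJ I J : length (map Zd I ++ map ZL J) = (length I + length J)%nat.
Proof. rewrite length_app, !length_map; reflexivity. Qed.

Lemma numL_IJ I J : numL (map Zd I ++ map ZL J) = length J.
Proof.
  unfold numL; rewrite filter_app, length_app.
  induction I; simpl; [induction J; simpl; congruence | assumption].
Qed.

Inductive shuffle : list zop -> list zop -> list zop -> Prop :=
  | shuffle_nil : shuffle [] [] []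
  | shuffle_l z K A B : shuffle K A B -> shuffle (z :: K) (z :: A) B
  | shuffle_r z K A B : shuffle K A B -> shuffle (z :: K) A (z :: B).

Lemma shuffle_all_r K : shuffle K [] K.
Proof. induction K; constructor; assumption. Qed.

Lemma shuffle_ZL J A B : shuffle (map ZL J) A B ->
  exists J1 J2, A = map ZL J2 /\ B = map ZL J1 /\ (length J1 + length J2 = length J)%nat.
Proof.
  revert A B; induction J as [|b J IH]; intros A B H; inversion H; subst.
  - exists [], []; auto.
  - destruct (IH _ _ H4) as [J1 [J2 [-> [-> hl]]]].
    exists J1, (b :: J2); simpl; repeat split; lia.
  - destruct (IH _ _ H4) as [J1 [J2 [-> [-> hl]]]].
    exists (b :: J1), J2; simpl; repeat split; lia.
Qed.

Lemma shuffle_IJ I J A B : shuffle (map Zd I ++ map ZL J) A B ->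
  exists I1 I2 J1 J2, A = map Zd I2 ++ map ZL J2 /\ B = map Zd I1 ++ map ZL J1 /\
    (length I1 + length I2 = length I)%nat /\ (length J1 + length J2 = length J)%nat.
Proof.
  revert A B; induction I as [|a I IH]; intros A B H.
  - destruct (shuffle_ZL J A B H) as [J1 [J2 [-> [-> hl]]]]; exists [], [], J1, J2; auto.
  - inversion H; subst.
    + destruct (IH _ _ H4) as [I1 [I2 [J1 [J2 [-> [-> [h1 h2]]]]]]].
      exists I1, (a :: I2), J1, J2; simpl; repeat split; lia.
    + destruct (IH _ _ H4) as [I1 [I2 [J1 [J2 [-> [-> [h1 h2]]]]]]].
      exists (a :: I1), I2, J1, J2; simpl; repeat split; lia.
Qed.

Lemma rhs1_nonneg I J Hb u t x y : 0 <= rhs1 I J Hb u t x y.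
Proof.
  apply sumR_map_nonneg; intros [[[I1 I2] J1] J2]; apply Rmult_le_pos; apply Rabs_pos.
Qed.

Lemma rhs1_ge I J Hb u t x y I1 I2 J1 J2 :
  (length I1 + length I2 <= length I)%nat -> (length J1 + length J2 <= length J)%nat ->
  (1 <= length I2 + length J2)%nat ->
  Rabs (pdI I2 (LJ J2 Hb) t x y) * Rabs (dtt (pdI I1 (LJ J1 u)) t x y) <= rhs1 I J Hb u t x y.
Proof.
  intros hI hJ hne; unfold rhs1.
  apply (sumR_map_ge (fun q : list idx3 * list idx3 * list idx2 * list idx2 =>
    let '(I1, I2, J1, J2) := q in
    Rabs (pdI I2 (LJ J2 Hb) t x y) * Rabs (dtt (pdI I1 (LJ J1 u)) t x y)) _ (I1, I2, J1, J2)).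
  - apply filter_In; split.
    + repeat apply in_prod; apply In_lists_upto; auto using In_all_idx3, In_all_idx2; lia.
    + apply andb_true_intro; split; [apply andb_true_intro; split|]; apply Nat.leb_le; lia.
  - intros [[[I1' I2'] J1'] J2']; apply Rmult_le_pos; apply Rabs_pos.
Qed.

Lemma rhs2_nonneg I J u t x y : 0 <= rhs2 I J u t x y.
Proof. apply sumR_map_nonneg; intros; apply Rabs_pos. Qed.

Lemma rhs2_ge I J u t x y J' : (length J' < length J)%nat ->
  Rabs (dtt (pdI I (LJ J' u)) t x y) <= rhs2 I J u t x y.
Proof.
  intros h; apply (sumR_map_ge (fun J' => Rabs (dtt (pdI I (LJ J' u)) t x y)));
    [| intros; apply Rabs_pos].
  apply filter_In; split; [apply In_lists_upto; auto using In_all_idx2; lia |].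
  apply Nat.ltb_lt; assumption.
Qed.

Lemma rhs3_terms_nonneg p k Hb u t x y b :
  In b (flat_map (fun p1 => flat_map (fun p2 => flat_map (fun k1 => map (fun k2 =>
      normpk p2 k2 Hb t x y * normd (p1 + 1) (k1 + 1) u t x y)
      (filter (fun k2 => Nat.leb (k1 + k2) k) (seq 0 (S k))))
      (seq 0 (S k)))
      (filter (fun p2 => Nat.leb (p1 + p2) p) (seq 0 (S p))))
    (seq 0 p)) -> 0 <= b.
Proof.
  intros hb; apply in_flat_map in hb as [p1 [_ hb]]; apply in_flat_map in hb as [p2 [_ hb]].
  apply in_flat_map in hb as [k1 [_ hb]]; apply in_map_iff in hb as [k2 [<- _]].
  apply Rmult_le_pos; [apply normpk_nonneg | apply normd_nonneg].
Qed.

Lemma rhs3_nonneg p k Hb u t x y : 0 <= rhs3 p k Hb u t x y.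
Proof. apply sumR_nonneg, rhs3_terms_nonneg. Qed.

Lemma rhs3_ge p k Hb u t x y p1 p2 k1 k2 :
  (p1 < p)%nat -> (p1 + p2 <= p)%nat -> (k1 + k2 <= k)%nat ->
  normpk p2 k2 Hb t x y * normd (p1 + 1) (k1 + 1) u t x y <= rhs3 p k Hb u t x y.
Proof.
  intros h1 h2 h3; apply sumR_ge; [| apply rhs3_terms_nonneg].
  apply in_flat_map; exists p1; split; [apply in_seq; lia|].
  apply in_flat_map; exists p2; split;
    [apply filter_In; split; [apply in_seq; lia | apply Nat.leb_le; lia]|].
  apply in_flat_map; exists k1; split; [apply in_seq; lia|].
  apply (in_map (fun k2 => normpk p2 k2 Hb t x y * normd (p1 + 1) (k1 + 1) u t x y)).
  apply filter_In; split; [apply in_seq; lia | apply Nat.leb_le; lia].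
Qed.

(** * Smooth functions, partial derivatives and boosts *)

Definition diff_on (V : R -> R -> R -> Prop) (w : fn) : Prop :=
  forall t x y, V t x y ->
    cont3_at w t x y /\
    ex_derive (fun s => w s x y) t /\
    ex_derive (fun s => w t s y) x /\
    ex_derive (fun s => w t x s) y.

Definition smooth_upto (V : R -> R -> R -> Prop) (n : nat) (w : fn) : Prop :=
  forall l, (length l <= n)%nat -> diff_on V (pdI l w).

Lemma smooth_on_diff_on V w : smooth_on V w <-> forall l, diff_on V (pdI l w).
Proof. split; intros H l; exact (H l). Qed.

Lemma smooth_on_upto V w : smooth_on V w <-> forall n, smooth_upto V n w.
Proof.
  rewrite smooth_on_diff_on; split.
  - intros H n l _; apply H.
  - intros H l; exact (H (length l) l (le_n _)).
Qed.

Lemma smooth_on_mono (U V : R -> R -> R -> Prop) w :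
  (forall t x y, V t x y -> U t x y) -> smooth_on U w -> smooth_on V w.
Proof. intros HVU Hw l t x y h; exact (Hw l t x y (HVU t x y h)). Qed.

Lemma pdI_app l1 l2 w : pdI (l1 ++ l2) w = pdI l1 (pdI l2 w).
Proof. apply fold_right_app. Qed.

Lemma smooth_upto_0 V w : smooth_upto V 0 w <-> diff_on V w.
Proof.
  split; [intros H; exact (H [] (le_n 0)) |].
  intros H [|a l] hl; [exact H | simpl in hl; lia].
Qed.

Lemma smooth_upto_S V n w :
  smooth_upto V (S n) w <-> diff_on V w /\ forall a, smooth_upto V n (pd a w).
Proof.
  split.
  - intros H; split; [apply (H []); simpl; lia|].
    intros a l hl; change (pdI l (pd a w)) with (pdI l (pdI [a] w)); rewrite <- pdI_app.
    apply H; rewrite length_app; simpl; lia.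
  - intros [H0 H1] l hl; destruct l as [|a l _] using rev_ind; [exact H0|].
    rewrite pdI_app; apply H1; rewrite length_app in hl; simpl in hl; lia.
Qed.

Lemma smooth_upto_le V n m w : (n <= m)%nat -> smooth_upto V m w -> smooth_upto V n w.
Proof. intros Hnm H l hl; apply H; lia. Qed.

Lemma locally_of_ball (t eps : R) (P : R -> Prop) :
  0 < eps -> (forall s, Rabs (s - t) < eps -> P s) -> locally t P.
Proof. intros he H; exists (mkposreal eps he); exact H. Qed.

Lemma cont3_at_slices g t x y : cont3_at g t x y ->
  continuity_2d_pt (fun p q => g p q y) t x /\
  continuity_2d_pt (fun p q => g p x q) t y /\
  continuity_2d_pt (fun p q => g t p q) x y.
Proof.
  intros Hg; repeat split; intros eps; destruct (Hg eps (cond_pos eps)) as [d [hd Hd]];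
    exists (mkposreal d hd); intros p q hp hq; apply Hd; rewrite ?Rminus_diag, ?Rabs_R0; auto.
Qed.

Section LocalCalculus.

Variable V : R -> R -> R -> Prop.
Hypothesis V_open : open3 V.

Definition eq_on (f g : fn) : Prop := forall t x y, V t x y -> f t x y = g t x y.

Lemma eq_on_sym f g : eq_on f g -> eq_on g f.
Proof. intros H t x y h; symmetry; auto. Qed.

Lemma eq_on_pd a f g : eq_on f g -> eq_on (pd a f) (pd a g).
Proof.
  intros He t x y h; destruct (V_open t x y h) as [eps [heps Hnear]].
  assert (R0 : Rabs 0 < eps) by (rewrite Rabs_R0; exact heps).
  destruct a; simpl; apply Derive_ext_loc, (locally_of_ball _ eps); auto;
    intros s hs; apply He, Hnear; rewrite ?Rminus_diag; auto.
Qed.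

Lemma eq_on_pdI l f g : eq_on f g -> eq_on (pdI l f) (pdI l g).
Proof. intros He; induction l; simpl; auto using eq_on_pd. Qed.

Lemma eq_on_boost b f g : eq_on f g -> eq_on (boost b f) (boost b g).
Proof.
  intros He t x y h; unfold boost.
  rewrite (eq_on_pd D0 f g He t x y h), (eq_on_pd (idx_of b) f g He t x y h); reflexivity.
Qed.

Lemma diff_on_ext f g : eq_on f g -> diff_on V f -> diff_on V g.
Proof.
  intros He Hf t x y h; destruct (Hf t x y h) as [Hc [Ht [Hx Hy]]].
  destruct (V_open t x y h) as [eps [heps Hnear]].
  assert (R0 : Rabs 0 < eps) by (rewrite Rabs_R0; exact heps).
  split; [|split; [|split]].
  - intros e he; destruct (Hc e he) as [d [hd Hd]].
    exists (Rmin d eps); split; [apply Rmin_glb_lt; auto|].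
    intros t' x' y' ht hx hy.
    pose proof (Rmin_l d eps); pose proof (Rmin_r d eps).
    rewrite <- (He t' x' y'), <- (He t x y) by (auto; apply Hnear; lra).
    apply Hd; lra.
  - apply (ex_derive_ext_loc (fun s => f s x y)); auto; apply (locally_of_ball _ eps); auto.
    intros s hs; apply He, Hnear; rewrite ?Rminus_diag; auto.
  - apply (ex_derive_ext_loc (fun s => f t s y)); auto; apply (locally_of_ball _ eps); auto.
    intros s hs; apply He, Hnear; rewrite ?Rminus_diag; auto.
  - apply (ex_derive_ext_loc (fun s => f t x s)); auto; apply (locally_of_ball _ eps); auto.
    intros s hs; apply He, Hnear; rewrite ?Rminus_diag; auto.
Qed.

Lemma smooth_upto_ext n f g : eq_on f g -> smooth_upto V n f -> smooth_upto V n g.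
Proof. intros He H l hl; apply (diff_on_ext (pdI l f)); auto using eq_on_pdI. Qed.

Lemma smooth_on_ext f g : eq_on f g -> smooth_on V f -> smooth_on V g.
Proof.
  rewrite !smooth_on_upto; intros He H n; apply (smooth_upto_ext n f); auto.
Qed.

Lemma pd_add a f g : diff_on V f -> diff_on V g ->
  eq_on (pd a (fadd f g)) (fadd (pd a f) (pd a g)).
Proof.
  intros Hf Hg t x y h.
  destruct (Hf t x y h) as [_ [f0 [f1 f2]]], (Hg t x y h) as [_ [g0 [g1 g2]]].
  destruct a; apply Derive_plus; assumption.
Qed.

Lemma pd_mul a f g : diff_on V f -> diff_on V g ->
  eq_on (pd a (fmul f g)) (fadd (fmul (pd a f) g) (fmul f (pd a g))).
Proof.
  intros Hf Hg t x y h.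
  destruct (Hf t x y h) as [_ [f0 [f1 f2]]], (Hg t x y h) as [_ [g0 [g1 g2]]].
  destruct a; apply Derive_mult; assumption.
Qed.

Lemma pd_scal a c f t x y : pd a (fscal c f) t x y = c * pd a f t x y.
Proof. destruct a; apply Derive_scal. Qed.

Lemma pd_const a c t x y : pd a (fconst c) t x y = 0.
Proof. destruct a; simpl; unfold fconst; apply Derive_const. Qed.

Lemma diff_on_add f g : diff_on V f -> diff_on V g -> diff_on V (fadd f g).
Proof.
  intros Hf Hg t x y h.
  destruct (Hf t x y h) as [f0 [f1 [f2 f3]]], (Hg t x y h) as [g0 [g1 [g2 g3]]].
  repeat split; [apply cont3_at_add; auto | ..]; unfold fadd;
    apply (ex_derive_plus (V := R_NormedModule)); assumption.
Qed.

Lemma diff_on_mul f g : diff_on V f -> diff_on V g -> diff_on V (fmul f g).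
Proof.
  intros Hf Hg t x y h.
  destruct (Hf t x y h) as [f0 [f1 [f2 f3]]], (Hg t x y h) as [g0 [g1 [g2 g3]]].
  repeat split; [apply cont3_at_mul; auto | ..]; unfold fmul; apply ex_derive_mult; assumption.
Qed.

Lemma diff_on_const c : diff_on V (fconst c).
Proof.
  intros t x y _; repeat split; [apply cont3_at_const | ..]; unfold fconst;
    apply ex_derive_const.
Qed.

Lemma smooth_upto_const n c : smooth_upto V n (fconst c).
Proof.
  revert c; induction n; intros c.
  - apply smooth_upto_0, diff_on_const.
  - apply smooth_upto_S; split; [apply diff_on_const|]; intros a.
    apply (smooth_upto_ext n (fconst 0)); auto.
    intros t x y _; rewrite pd_const; reflexivity.
Qed.

Lemma smooth_upto_add n f g :
  smooth_upto V n f -> smooth_upto V n g -> smooth_upto V n (fadd f g).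
Proof.
  revert f g; induction n; intros f g Hf Hg.
  - apply smooth_upto_0; apply smooth_upto_0 in Hf, Hg; apply diff_on_add; auto.
  - apply smooth_upto_S in Hf as [f0 f1], Hg as [g0 g1].
    apply smooth_upto_S; split; [apply diff_on_add; auto|]; intros a.
    apply (smooth_upto_ext n (fadd (pd a f) (pd a g))); auto.
    apply eq_on_sym, pd_add; auto.
Qed.

Lemma smooth_upto_mul n f g :
  smooth_upto V n f -> smooth_upto V n g -> smooth_upto V n (fmul f g).
Proof.
  revert f g; induction n; intros f g Hf Hg.
  - apply smooth_upto_0; apply smooth_upto_0 in Hf, Hg; apply diff_on_mul; auto.
  - pose proof (smooth_upto_le V n (S n) f (le_S _ _ (le_n n)) Hf) as Hf'.
    pose proof (smooth_upto_le V n (S n) g (le_S _ _ (le_n n)) Hg) as Hg'.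
    apply smooth_upto_S in Hf as [f0 f1], Hg as [g0 g1].
    apply smooth_upto_S; split; [apply diff_on_mul; auto|]; intros a.
    apply (smooth_upto_ext n (fadd (fmul (pd a f) g) (fmul f (pd a g)))).
    + apply eq_on_sym, pd_mul; auto.
    + apply smooth_upto_add; auto.
Qed.

Lemma smooth_on_const c : smooth_on V (fconst c).
Proof. apply smooth_on_upto; intros n; apply smooth_upto_const. Qed.

Lemma smooth_on_add f g : smooth_on V f -> smooth_on V g -> smooth_on V (fadd f g).
Proof. rewrite !smooth_on_upto; intros Hf Hg n; apply smooth_upto_add; auto. Qed.

Lemma smooth_on_mul f g : smooth_on V f -> smooth_on V g -> smooth_on V (fmul f g).
Proof. rewrite !smooth_on_upto; intros Hf Hg n; apply smooth_upto_mul; auto. Qed.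

Lemma smooth_on_scal c f : smooth_on V f -> smooth_on V (fscal c f).
Proof. intros Hf; apply (smooth_on_mul (fconst c) f); auto using smooth_on_const. Qed.

Lemma smooth_on_pd a f : smooth_on V f -> smooth_on V (pd a f).
Proof.
  rewrite !smooth_on_upto; intros Hf n.
  exact (proj2 (proj1 (smooth_upto_S V n f) (Hf (S n))) a).
Qed.

Lemma smooth_on_diff f : smooth_on V f -> diff_on V f.
Proof. intros Hf; exact (proj1 (smooth_on_diff_on V f) Hf []). Qed.

Lemma smooth_on_pdI l f : smooth_on V f -> smooth_on V (pdI l f).
Proof. intros Hf; induction l; simpl; auto using smooth_on_pd. Qed.

Lemma smooth_on_of_const_pd w :
  diff_on V w -> (forall a, exists c, eq_on (pd a w) (fconst c)) -> smooth_on V w.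
Proof.
  intros H0 H1; apply smooth_on_upto; intros [|n]; [apply smooth_upto_0; exact H0|].
  apply smooth_upto_S; split; auto; intros a; destruct (H1 a) as [c Hc].
  apply (smooth_upto_ext n (fconst c)); auto using eq_on_sym, smooth_upto_const.
Qed.

Lemma smooth_on_time : smooth_on V ftime.
Proof.
  apply smooth_on_of_const_pd.
  - intros t x y _; split; [apply cont3_at_time|]; unfold ftime.
    split; [apply ex_derive_id|]; split; apply ex_derive_const.
  - intros [| |]; [exists 1 | exists 0 | exists 0]; intros t x y _; simpl;
      unfold ftime, fconst; first [apply Derive_id | apply Derive_const].
Qed.

Lemma smooth_on_coord b : smooth_on V (coord b).
Proof.
  apply smooth_on_of_const_pd.
  - intros t x y _; split; [apply cont3_at_coord|]; destruct b; simpl.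
    + split; [apply ex_derive_const|]; split; [apply ex_derive_id | apply ex_derive_const].
    + split; [apply ex_derive_const|]; split; [apply ex_derive_const | apply ex_derive_id].
  - intros a; destruct a, b; [exists 0 | exists 0 | exists 1 | exists 0 | exists 0 | exists 1];
      intros t x y _; simpl; first [apply Derive_id | apply Derive_const].
Qed.

Lemma smooth_on_recip_time :
  (forall t x y, V t x y -> 0 < t) -> smooth_on V frecip_time.
Proof.
  intros Vpos; apply smooth_on_upto; intros n; induction n.
  - apply smooth_upto_0; intros t x y h; pose proof (Vpos t x y h).
    split; [apply (cont3_at_of_ex_derive_time (fun s => / s)); auto_derive; lra|].
    unfold frecip_time; repeat split; [auto_derive; lra | ..]; apply ex_derive_const.
  - apply smooth_upto_S; split.
    + apply smooth_upto_0, (smooth_upto_le V 0 n); [lia | exact IHn].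
    + intros [| |].
      * apply (smooth_upto_ext n (fscal (-1) (fmul frecip_time frecip_time))).
        -- intros t x y h; pose proof (Vpos t x y h); simpl; unfold frecip_time, fscal, fmul.
           rewrite Derive_inv, Derive_id; [field; lra | apply ex_derive_id | lra].
        -- apply smooth_upto_mul; [apply (smooth_upto_const n (-1)) | apply smooth_upto_mul; exact IHn].
      * apply (smooth_upto_ext n (fconst 0)); auto using smooth_upto_const.
        intros t x y _; cbn [pd]; unfold frecip_time, fconst; symmetry; apply Derive_const.
      * apply (smooth_upto_ext n (fconst 0)); auto using smooth_upto_const.
        intros t x y _; cbn [pd]; unfold frecip_time, fconst; symmetry; apply Derive_const.
Qed.

Lemma pd_comm_01 w t x y : smooth_on V w -> V t x y ->
  pd D0 (pd D1 w) t x y = pd D1 (pd D0 w) t x y.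
Proof.
  intros Hw h; destruct (V_open t x y h) as [eps [heps Hnear]].
  apply (Schwarz (fun p q => w p q y)).
  - exists (mkposreal eps heps); intros p q hp hq.
    assert (hV : V p q y) by (apply Hnear; rewrite ?Rminus_diag, ?Rabs_R0; auto).
    destruct (Hw [] p q y hV) as [_ [A0 [A1 _]]], (Hw [D1] p q y hV) as [_ [B0 _]],
      (Hw [D0] p q y hV) as [_ [_ [C1 _]]].
    repeat split; assumption.
  - apply (cont3_at_slices _ t x y (proj1 (Hw [D0; D1] t x y h))).
  - apply (cont3_at_slices _ t x y (proj1 (Hw [D1; D0] t x y h))).
Qed.

Lemma pd_comm_02 w t x y : smooth_on V w -> V t x y ->
  pd D0 (pd D2 w) t x y = pd D2 (pd D0 w) t x y.
Proof.
  intros Hw h; destruct (V_open t x y h) as [eps [heps Hnear]].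
  apply (Schwarz (fun p q => w p x q)).
  - exists (mkposreal eps heps); intros p q hp hq.
    assert (hV : V p x q) by (apply Hnear; rewrite ?Rminus_diag, ?Rabs_R0; auto).
    destruct (Hw [] p x q hV) as [_ [A0 [_ A2]]], (Hw [D2] p x q hV) as [_ [B0 _]],
      (Hw [D0] p x q hV) as [_ [_ [_ C2]]].
    repeat split; assumption.
  - apply (cont3_at_slices _ t x y (proj1 (Hw [D0; D2] t x y h))).
  - apply (cont3_at_slices _ t x y (proj1 (Hw [D2; D0] t x y h))).
Qed.

Lemma pd_comm_12 w t x y : smooth_on V w -> V t x y ->
  pd D1 (pd D2 w) t x y = pd D2 (pd D1 w) t x y.
Proof.
  intros Hw h; destruct (V_open t x y h) as [eps [heps Hnear]].
  apply (Schwarz (fun p q => w t p q)).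
  - exists (mkposreal eps heps); intros p q hp hq.
    assert (hV : V t p q) by (apply Hnear; rewrite ?Rminus_diag, ?Rabs_R0; auto).
    destruct (Hw [] t p q hV) as [_ [_ [A1 A2]]], (Hw [D2] t p q hV) as [_ [_ [B1 _]]],
      (Hw [D1] t p q hV) as [_ [_ [_ C2]]].
    repeat split; assumption.
  - apply (cont3_at_slices _ t x y (proj1 (Hw [D1; D2] t x y h))).
  - apply (cont3_at_slices _ t x y (proj1 (Hw [D2; D1] t x y h))).
Qed.

Lemma pd_comm a b w : smooth_on V w -> eq_on (pd a (pd b w)) (pd b (pd a w)).
Proof.
  intros Hw t x y h.
  destruct a, b;
    [ reflexivity | apply pd_comm_01 | apply pd_comm_02
    | symmetry; apply pd_comm_01 | reflexivity | apply pd_comm_12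
    | symmetry; apply pd_comm_02 | symmetry; apply pd_comm_12 | reflexivity ];
    assumption.
Qed.

Lemma boost_split b w :
  boost b w = fadd (fmul (coord b) (pd D0 w)) (fmul ftime (pd (idx_of b) w)).
Proof. reflexivity. Qed.

Lemma smooth_on_boost b w : smooth_on V w -> smooth_on V (boost b w).
Proof.
  intros Hw; rewrite boost_split.
  apply smooth_on_add; apply smooth_on_mul;
    auto using smooth_on_coord, smooth_on_time, smooth_on_pd.
Qed.

Lemma smooth_on_zop z w : smooth_on V w -> smooth_on V (apply_zop z w).
Proof. destruct z; simpl; auto using smooth_on_pd, smooth_on_boost. Qed.

Lemma smooth_on_applyZ K w : smooth_on V w -> smooth_on V (applyZ K w).
Proof. intros Hw; induction K; simpl; auto using smooth_on_zop. Qed.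

Lemma smooth_on_LJ J w : smooth_on V w -> smooth_on V (LJ J w).
Proof. intros Hw; induction J; simpl; auto using smooth_on_boost. Qed.

Lemma smooth_on_dtt w : smooth_on V w -> smooth_on V (dtt w).
Proof. intros Hw; apply smooth_on_pd, smooth_on_pd, Hw. Qed.

Definition kron (a c : idx3) : R :=
  match a, c with D0, D0 | D1, D1 | D2, D2 => 1 | _, _ => 0 end.

Lemma kron_abs a c : Rabs (kron a c) <= 1.
Proof. destruct a, c; simpl; rewrite ?Rabs_R1, ?Rabs_R0; lra. Qed.

Lemma pd_coord a b t x y : pd a (coord b) t x y = kron a (idx_of b).
Proof. destruct a, b; simpl; first [apply Derive_id | apply Derive_const]. Qed.

Lemma pd_time a t x y : pd a ftime t x y = kron a D0.
Proof. destruct a; unfold ftime; simpl; first [apply Derive_id | apply Derive_const]. Qed.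

Lemma pd_boost a b w : smooth_on V w ->
  eq_on (pd a (boost b w))
    (fadd (boost b (pd a w))
       (fadd (fscal (kron a (idx_of b)) (pd D0 w)) (fscal (kron a D0) (pd (idx_of b) w)))).
Proof.
  intros Hw t x y h; rewrite boost_split.
  pose proof (smooth_on_diff _ (smooth_on_coord b)) as Dc.
  pose proof (smooth_on_diff _ smooth_on_time) as Dt.
  pose proof (smooth_on_diff _ (smooth_on_pd D0 w Hw)) as D0w.
  pose proof (smooth_on_diff _ (smooth_on_pd (idx_of b) w Hw)) as Dbw.
  rewrite (pd_add a _ _ (diff_on_mul _ _ Dc D0w) (diff_on_mul _ _ Dt Dbw) t x y h).
  unfold fadd at 1.
  rewrite (pd_mul a _ _ Dc D0w t x y h), (pd_mul a _ _ Dt Dbw t x y h).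
  unfold fadd, fmul, fscal, boost; rewrite pd_coord, pd_time.
  rewrite (pd_comm a D0 w Hw t x y h), (pd_comm a (idx_of b) w Hw t x y h).
  unfold ftime; ring.
Qed.

Lemma boost_add b f g : diff_on V f -> diff_on V g ->
  eq_on (boost b (fadd f g)) (fadd (boost b f) (boost b g)).
Proof.
  intros Hf Hg t x y h; unfold boost.
  rewrite (pd_add D0 f g Hf Hg t x y h), (pd_add (idx_of b) f g Hf Hg t x y h).
  unfold fadd; ring.
Qed.

Lemma boost_mul b f g : diff_on V f -> diff_on V g ->
  eq_on (boost b (fmul f g)) (fadd (fmul (boost b f) g) (fmul f (boost b g))).
Proof.
  intros Hf Hg t x y h; unfold boost.
  rewrite (pd_mul D0 f g Hf Hg t x y h), (pd_mul (idx_of b) f g Hf Hg t x y h).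
  unfold fadd, fmul; ring.
Qed.

Lemma boost_scal b c f t x y : boost b (fscal c f) t x y = c * boost b f t x y.
Proof. unfold boost; rewrite !pd_scal; ring. Qed.

Lemma boost_const b c t x y : boost b (fconst c) t x y = 0.
Proof. unfold boost; rewrite !pd_const; ring. Qed.

Lemma zop_mul z f g : smooth_on V f -> smooth_on V g ->
  eq_on (apply_zop z (fmul f g)) (fadd (fmul (apply_zop z f) g) (fmul f (apply_zop z g))).
Proof.
  intros Hf Hg; pose proof (smooth_on_diff _ Hf); pose proof (smooth_on_diff _ Hg).
  destruct z; simpl; [apply pd_mul | apply boost_mul]; assumption.
Qed.

Lemma pd2_boost_comm b g d w : smooth_on V w ->
  eq_on (fsub (pd g (pd d (boost b w))) (boost b (pd g (pd d w))))
    (fadd (fadd (fscal (kron d (idx_of b)) (pd g (pd D0 w)))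
                (fscal (kron d D0) (pd g (pd (idx_of b) w))))
          (fadd (fscal (kron g (idx_of b)) (pd D0 (pd d w)))
                (fscal (kron g D0) (pd (idx_of b) (pd d w))))).
Proof.
  intros Hw t x y h.
  assert (Sd : smooth_on V (pd d w)) by auto using smooth_on_pd.
  assert (S1 : diff_on V (boost b (pd d w))) by auto using smooth_on_diff, smooth_on_boost.
  assert (S2 : diff_on V (fscal (kron d (idx_of b)) (pd D0 w)))
    by auto using smooth_on_diff, smooth_on_scal, smooth_on_pd.
  assert (S3 : diff_on V (fscal (kron d D0) (pd (idx_of b) w)))
    by auto using smooth_on_diff, smooth_on_scal, smooth_on_pd.
  unfold fsub.
  rewrite (eq_on_pd g _ _ (pd_boost d b w Hw) t x y h).
  rewrite (pd_add g _ _ S1 (diff_on_add _ _ S2 S3) t x y h); unfold fadd at 1.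
  rewrite (pd_add g _ _ S2 S3 t x y h), (pd_boost g b (pd d w) Sd t x y h).
  unfold fadd; rewrite !pd_scal; unfold fscal; ring.
Qed.

(** * Bounded linear combinations *)

(* [lincomb B c v]: on [V], [v] is a finite linear combination of members of [B]
   whose coefficients have absolute values summing to at most [c]. *)
Inductive lincomb (B : fn -> Prop) : R -> fn -> Prop :=
  | lc_zero : lincomb B 0 (fconst 0)
  | lc_base b : B b -> lincomb B 1 b
  | lc_add c1 c2 v1 v2 :
      lincomb B c1 v1 -> lincomb B c2 v2 -> lincomb B (c1 + c2) (fadd v1 v2)
  | lc_scal k c v : lincomb B c v -> lincomb B (Rabs k * c) (fscal k v)
  | lc_ext c v w : lincomb B c v -> eq_on v w -> lincomb B c w
  | lc_weaken c c' v : lincomb B c v -> c <= c' -> lincomb B c' v.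

Lemma lincomb_bound B c v M t x y : V t x y -> 0 <= M ->
  (forall b, B b -> Rabs (b t x y) <= M) -> lincomb B c v -> Rabs (v t x y) <= c * M.
Proof.
  intros h hM HB; induction 1.
  - unfold fconst; rewrite Rabs_R0; lra.
  - rewrite Rmult_1_l; auto.
  - unfold fadd; eapply Rle_trans; [apply Rabs_triang | lra].
  - unfold fscal; rewrite Rabs_mult, Rmult_assoc.
    apply Rmult_le_compat_l; [apply Rabs_pos | assumption].
  - rewrite <- H0; assumption.
  - eapply Rle_trans; [eassumption | apply Rmult_le_compat_r; assumption].
Qed.

Lemma lincomb_smooth B c v :
  (forall b, B b -> smooth_on V b) -> lincomb B c v -> smooth_on V v.
Proof.
  intros HB; induction 1;
    eauto using smooth_on_const, smooth_on_add, smooth_on_scal, smooth_on_ext.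
Qed.

Lemma lincomb_incl (B B' : fn -> Prop) c v :
  (forall b, B b -> B' b) -> lincomb B c v -> lincomb B' c v.
Proof. intros HB; induction 1; eauto using lincomb. Qed.

Lemma lincomb_sub B c1 c2 v1 v2 :
  lincomb B c1 v1 -> lincomb B c2 v2 -> lincomb B (c1 + c2) (fsub v1 v2).
Proof.
  intros H1 H2; apply (lc_ext _ _ (fadd v1 (fscal (-1) v2))).
  - replace c2 with (Rabs (-1) * c2) by (rewrite Rabs_left by lra; ring).
    apply lc_add, lc_scal; assumption.
  - intros t x y _; unfold fadd, fsub, fscal; ring.
Qed.

Lemma lincomb_four B k1 k2 k3 k4 A1 A2 A3 A4 :
  Rabs k1 <= 1 -> Rabs k2 <= 1 -> Rabs k3 <= 1 -> Rabs k4 <= 1 ->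
  B A1 -> B A2 -> B A3 -> B A4 ->
  lincomb B 4 (fadd (fadd (fscal k1 A1) (fscal k2 A2)) (fadd (fscal k3 A3) (fscal k4 A4))).
Proof.
  intros h1 h2 h3 h4 B1 B2 B3 B4.
  apply (lc_weaken _ ((Rabs k1 * 1 + Rabs k2 * 1) + (Rabs k3 * 1 + Rabs k4 * 1))); [|lra].
  repeat apply lc_add; apply lc_scal, lc_base; assumption.
Qed.

Lemma lincomb_mul_l B c v h : lincomb B c v ->
  lincomb (fun hb => exists b, B b /\ hb = fmul h b) c (fmul h v).
Proof.
  induction 1.
  - apply (lc_ext _ _ (fconst 0)); [apply lc_zero|].
    intros t x y _; unfold fmul, fconst; ring.
  - apply lc_base; eauto.
  - apply (lc_ext _ _ (fadd (fmul h v1) (fmul h v2))); [apply lc_add; assumption|].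
    intros t x y _; unfold fmul, fadd; ring.
  - apply (lc_ext _ _ (fscal k (fmul h v))); [apply lc_scal; assumption|].
    intros t x y _; unfold fmul, fscal; ring.
  - apply (lc_ext _ _ (fmul h v)); [assumption|].
    intros t x y hv; unfold fmul; rewrite H0; auto.
  - eapply lc_weaken; eassumption.
Qed.

Record linear_on (T : fn -> fn) : Prop := {
  lin_ext : forall f g, eq_on f g -> eq_on (T f) (T g);
  lin_add : forall f g, smooth_on V f -> smooth_on V g ->
    eq_on (T (fadd f g)) (fadd (T f) (T g));
  lin_scal : forall k f, eq_on (T (fscal k f)) (fscal k (T f));
  lin_zero : eq_on (T (fconst 0)) (fconst 0) }.

Lemma linear_on_pd a : linear_on (pd a).
Proof.
  split.
  - apply eq_on_pd.
  - intros f g Hf Hg; apply pd_add; apply smooth_on_diff; assumption.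
  - intros k f t x y _; apply pd_scal.
  - intros t x y _; apply pd_const.
Qed.

Lemma linear_on_boost b : linear_on (boost b).
Proof.
  split.
  - apply eq_on_boost.
  - intros f g Hf Hg; apply boost_add; apply smooth_on_diff; assumption.
  - intros k f t x y _; apply boost_scal.
  - intros t x y _; apply boost_const.
Qed.

Lemma linear_on_zop z : linear_on (apply_zop z).
Proof. destruct z; [apply linear_on_pd | apply linear_on_boost]. Qed.

Lemma lincomb_map T B B' c0 c v : linear_on T ->
  (forall b, B b -> smooth_on V b) -> (forall b, B b -> lincomb B' c0 (T b)) -> 0 <= c0 ->
  lincomb B c v -> lincomb B' (c * c0) (T v).
Proof.
  intros HT HB HTB hc0; induction 1.
  - apply (lc_weaken _ 0); [|lra].
    apply (lc_ext _ _ (fconst 0)); [apply lc_zero | apply eq_on_sym, lin_zero, HT].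
  - rewrite Rmult_1_l; auto.
  - rewrite Rmult_plus_distr_r; apply (lc_ext _ _ (fadd (T v1) (T v2))); [apply lc_add; auto|].
    apply eq_on_sym, lin_add; eauto using lincomb_smooth.
  - rewrite Rmult_assoc; apply (lc_ext _ _ (fscal k (T v))); [apply lc_scal; auto|].
    apply eq_on_sym, lin_scal, HT.
  - apply (lc_ext _ _ (T v)); [auto | apply lin_ext; assumption].
  - apply (lc_weaken _ (c * c0)); [auto | apply Rmult_le_compat_r; assumption].
Qed.

Definition first_derivs (u : fn) (n m : nat) (b : fn) : Prop :=
  exists K a, (length K <= n)%nat /\ (numL K <= m)%nat /\ b = applyZ K (pd a u).

Lemma smooth_on_first_derivs u n m b :
  smooth_on V u -> first_derivs u n m b -> smooth_on V b.
Proof. intros Hu [K [a [_ [_ ->]]]]; auto using smooth_on_applyZ, smooth_on_pd. Qed.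

Lemma first_derivs_mono u n m n' m' b : (n <= n')%nat -> (m <= m')%nat ->
  first_derivs u n m b -> first_derivs u n' m' b.
Proof. intros hn hm [K [a [hK [hL ->]]]]; exists K, a; repeat split; lia. Qed.

Lemma pd_applyZ_lincomb u K a : smooth_on V u ->
  lincomb (first_derivs u (length K) (numL K)) (3 ^ length K) (pd a (applyZ K u)).
Proof.
  intros Hu; revert a; induction K as [|z K IH]; intros a.
  - apply (lc_weaken _ 1); [|simpl; lra].
    apply lc_base; exists [], a; simpl; repeat split; lia.
  - assert (Hp : 0 < 3 ^ length K) by (apply pow_lt; lra).
    assert (Sv : smooth_on V (applyZ K u)) by auto using smooth_on_applyZ.
    assert (Lift : forall b, first_derivs u (length K) (numL K) b ->
                    lincomb (first_derivs u (length (z :: K)) (numL (z :: K))) 1 (apply_zop z b)).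
    { intros b [K' [g [hK [hL ->]]]]; apply lc_base; exists (z :: K'), g.
      destruct z; simpl; unfold numL in *; simpl; repeat split; lia. }
    destruct z as [e | b]; simpl.
    + apply (lc_ext _ _ (pd e (pd a (applyZ K u)))); [| apply pd_comm; assumption].
      apply (lc_weaken _ (3 ^ length K * 1)); [|lra].
      apply (lincomb_map (pd e) (first_derivs u (length K) (numL K)));
        [ apply linear_on_pd | intros b; apply smooth_on_first_derivs; assumption
        | exact Lift | lra | apply IH ].
    + apply (lc_ext _ _ (fadd (boost b (pd a (applyZ K u)))
        (fadd (fscal (kron a (idx_of b)) (pd D0 (applyZ K u)))
              (fscal (kron a D0) (pd (idx_of b) (applyZ K u))))));
        [| apply eq_on_sym, pd_boost; assumption].
      pose proof (kron_abs a (idx_of b)); pose proof (kron_abs a D0).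
      apply (lc_weaken _ (3 ^ length K * 1 + (Rabs (kron a (idx_of b)) * 3 ^ length K
                                               + Rabs (kron a D0) * 3 ^ length K))); [|nra].
      apply lc_add; [| apply lc_add; apply lc_scal].
      * apply (lincomb_map (boost b) (first_derivs u (length K) (numL K)));
          [ apply linear_on_boost | intros b'; apply smooth_on_first_derivs; assumption
          | exact Lift | lra | apply IH ].
      * apply (lincomb_incl (first_derivs u (length K) (numL K))); [|apply IH].
        intros b'; apply first_derivs_mono; unfold numL; simpl; lia.
      * apply (lincomb_incl (first_derivs u (length K) (numL K))); [|apply IH].
        intros b'; apply first_derivs_mono; unfold numL; simpl; lia.
Qed.

Lemma linear_on_sub T f g : linear_on T -> smooth_on V f -> smooth_on V g ->
  eq_on (T (fsub f g)) (fsub (T f) (T g)).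
Proof.
  intros HT Hf Hg t x y h.
  rewrite (lin_ext T HT (fsub f g) (fadd f (fscal (-1) g))) by
    (auto; intros t' x' y' _; unfold fsub, fadd, fscal; ring).
  rewrite (lin_add T HT f _ Hf (smooth_on_scal (-1) g Hg) t x y h).
  unfold fadd at 1; rewrite (lin_scal T HT (-1) g t x y h).
  unfold fsub, fscal; ring.
Qed.

Definition leibniz_terms (f g : fn) (K : list zop) (b : fn) : Prop :=
  exists A B, shuffle K A B /\ A <> [] /\ b = fmul (applyZ A f) (applyZ B g).

Lemma smooth_on_leibniz_terms f g K b : smooth_on V f -> smooth_on V g ->
  leibniz_terms f g K b -> smooth_on V b.
Proof. intros Hf Hg [A [B [_ [_ ->]]]]; auto using smooth_on_mul, smooth_on_applyZ. Qed.

Lemma applyZ_mul_lincomb f g K : smooth_on V f -> smooth_on V g ->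
  lincomb (leibniz_terms f g K) (3 ^ length K)
    (fsub (applyZ K (fmul f g)) (fmul f (applyZ K g))).
Proof.
  intros Hf Hg; induction K as [|z K IH].
  - apply (lc_weaken _ 0); [|simpl; lra].
    apply (lc_ext _ _ (fconst 0)); [apply lc_zero|].
    intros t x y _; unfold fsub, fconst; simpl; ring.
  - cbn [applyZ fold_right length]; fold (applyZ K (fmul f g)) (applyZ K g).
    assert (SX : smooth_on V (applyZ K (fmul f g))) by auto using smooth_on_applyZ, smooth_on_mul.
    assert (SY : smooth_on V (applyZ K g)) by auto using smooth_on_applyZ.
    set (X := applyZ K (fmul f g)) in *; set (Y := applyZ K g) in *.
    apply (lc_ext _ _ (fadd (apply_zop z (fsub X (fmul f Y))) (fmul (apply_zop z f) Y))).
    2: { intros t x y h.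
         unfold fadd; rewrite (linear_on_sub _ X (fmul f Y) (linear_on_zop z) SX
                                 (smooth_on_mul _ _ Hf SY) t x y h).
         unfold fsub; rewrite (zop_mul z f Y Hf SY t x y h); unfold fadd, fmul; ring. }
    assert (H3 : 1 <= 3 ^ length K) by (apply pow_R1_Rle; lra).
    apply (lc_weaken _ (3 ^ length K * 2 + 1)); [|simpl; lra].
    apply lc_add.
    + apply (lincomb_map (apply_zop z) (leibniz_terms f g K));
        [ apply linear_on_zop | intros b; apply smooth_on_leibniz_terms; assumption
        | | lra | exact IH ].
      intros b [A [B [hs [hA ->]]]].
      apply (lc_ext _ _ (fadd (fmul (applyZ (z :: A) f) (applyZ B g))
                              (fmul (applyZ A f) (applyZ (z :: B) g)))).
      * replace 2 with (1 + 1) by ring.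
        apply lc_add; apply lc_base.
        -- exists (z :: A), B; repeat split; [constructor; assumption | discriminate].
        -- exists A, (z :: B); repeat split; [constructor; assumption | assumption].
      * apply eq_on_sym, zop_mul; auto using smooth_on_applyZ.
    + apply lc_base; exists [z], K; repeat split; [constructor; apply shuffle_all_r | discriminate].
Qed.

Definition dd_terms (u : fn) (I : list idx3) (n : nat) (b : fn) : Prop :=
  exists g d J', (length J' < n)%nat /\ b = pd g (pd d (pdI I (LJ J' u))).

Lemma smooth_on_dd_terms u I n b : smooth_on V u -> dd_terms u I n b -> smooth_on V b.
Proof.
  intros Hu [g [d [J' [_ ->]]]]; auto using smooth_on_pd, smooth_on_pdI, smooth_on_LJ.
Qed.

Lemma dd_terms_base u I n g d J' : (length J' < n)%nat ->
  lincomb (dd_terms u I n) 1 (pd g (pd d (pdI I (LJ J' u)))).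
Proof. intros h; apply lc_base; exists g, d, J'; auto. Qed.

Lemma boost_pd2_lincomb u n b g d J' : smooth_on V u -> (S (length J') < n)%nat ->
  lincomb (dd_terms u [] n) 5 (boost b (pd g (pd d (LJ J' u)))).
Proof.
  intros Hu hJ.
  assert (SW : smooth_on V (LJ J' u)) by auto using smooth_on_LJ.
  set (W := LJ J' u) in *.
  apply (lc_ext _ _ (fsub (pd g (pd d (boost b W)))
    (fadd (fadd (fscal (kron d (idx_of b)) (pd g (pd D0 W)))
                (fscal (kron d D0) (pd g (pd (idx_of b) W))))
          (fadd (fscal (kron g (idx_of b)) (pd D0 (pd d W)))
                (fscal (kron g D0) (pd (idx_of b) (pd d W))))))).
  - replace 5 with (1 + 4) by ring.
    apply lincomb_sub.
    + apply (dd_terms_base u [] n g d (b :: J')); simpl; lia.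
    + apply lincomb_four; try apply kron_abs;
        do 2 eexists; exists J'; (split; [lia | reflexivity]).
  - intros t x y h; pose proof (pd2_boost_comm b g d W SW t x y h) as E.
    unfold fsub in *; lra.
Qed.

Lemma LJ_dtt_lincomb u J : smooth_on V u ->
  lincomb (dd_terms u [] (length J)) (9 ^ length J) (fsub (LJ J (dtt u)) (dtt (LJ J u))).
Proof.
  intros Hu; induction J as [|b J IH].
  - apply (lc_weaken _ 0); [|simpl; lra].
    apply (lc_ext _ _ (fconst 0)); [apply lc_zero|].
    intros t x y _; unfold fsub, fconst; simpl; ring.
  - cbn [LJ fold_right length]; fold (LJ J (dtt u)) (LJ J u).
    assert (SX : smooth_on V (LJ J (dtt u))) by auto using smooth_on_LJ, smooth_on_dtt.
    assert (SY : smooth_on V (LJ J u)) by auto using smooth_on_LJ.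
    set (X := LJ J (dtt u)) in *; set (Y := LJ J u) in *.
    assert (SdY : smooth_on V (dtt Y)) by auto using smooth_on_dtt.
    pose proof (pd2_boost_comm b D0 D0 Y SY) as Edtt; fold (dtt Y) (dtt (boost b Y)) in Edtt.
    apply (lc_ext _ _ (fadd (boost b (fsub X (dtt Y)))
                            (fsub (boost b (dtt Y)) (dtt (boost b Y))))).
    2: { intros t x y h; unfold fadd at 1.
         rewrite (linear_on_sub _ X (dtt Y) (linear_on_boost b) SX SdY t x y h).
         unfold fsub; ring. }
    assert (H9 : 1 <= 9 ^ length J) by (apply pow_R1_Rle; lra).
    apply (lc_weaken _ (9 ^ length J * 5 + 4)); [|simpl; lra].
    apply lc_add.
    + apply (lincomb_map (boost b) (dd_terms u [] (length J)));
        [ apply linear_on_boost | intros b'; apply smooth_on_dd_terms; assumption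
        | | lra | exact IH ].
      intros b' [g [d [J' [hJ ->]]]]; apply boost_pd2_lincomb; simpl; auto; lia.
    + apply (lc_ext _ _ (fscal (-1)
        (fadd (fadd (fscal (kron D0 (idx_of b)) (pd D0 (pd D0 Y)))
                    (fscal (kron D0 D0) (pd D0 (pd (idx_of b) Y))))
              (fadd (fscal (kron D0 (idx_of b)) (pd D0 (pd D0 Y)))
                    (fscal (kron D0 D0) (pd (idx_of b) (pd D0 Y))))))).
      * replace 4 with (Rabs (-1) * 4) by (rewrite Rabs_left by lra; ring).
        apply lc_scal, lincomb_four; try apply kron_abs;
          do 2 eexists; exists J; (split; [simpl; lia | reflexivity]).
      * intros t x y h; specialize (Edtt t x y h); unfold fsub, fscal, fadd, dtt in *; lra.
Qed.

Lemma pd_comm3 a g d w : smooth_on V w ->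
  eq_on (pd a (pd g (pd d w))) (pd g (pd d (pd a w))).
Proof.
  intros Hw t x y h.
  rewrite (pd_comm a g (pd d w) (smooth_on_pd d w Hw) t x y h).
  apply (eq_on_pd g _ _ (pd_comm a d w Hw) t x y h).
Qed.

Lemma pdI_LJ_dtt_lincomb u I J : smooth_on V u ->
  lincomb (dd_terms u I (length J)) (9 ^ length J)
    (fsub (pdI I (LJ J (dtt u))) (dtt (pdI I (LJ J u)))).
Proof.
  intros Hu; induction I as [|a I IH]; [exact (LJ_dtt_lincomb u J Hu)|].
  cbn [pdI fold_right]; fold (pdI I (LJ J (dtt u))) (pdI I (LJ J u)).
  assert (SA : smooth_on V (pdI I (LJ J (dtt u))))
    by auto using smooth_on_pdI, smooth_on_LJ, smooth_on_dtt.
  assert (SB : smooth_on V (pdI I (LJ J u))) by auto using smooth_on_pdI, smooth_on_LJ.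
  apply (lc_ext _ _ (pd a (fsub (pdI I (LJ J (dtt u))) (dtt (pdI I (LJ J u)))))).
  2: { intros t x y h.
       rewrite (linear_on_sub _ _ _ (linear_on_pd a) SA (smooth_on_dtt _ SB) t x y h).
       unfold fsub, dtt; rewrite (pd_comm3 a D0 D0 _ SB t x y h); reflexivity. }
  apply (lc_weaken _ (9 ^ length J * 1)); [|lra].
  apply (lincomb_map (pd a) (dd_terms u I (length J)));
    [ apply linear_on_pd | intros b; apply smooth_on_dd_terms; assumption
    | | lra | exact IH ].
  intros b [g [d [J' [hJ ->]]]].
  apply (lc_ext _ _ (pd g (pd d (pdI (a :: I) (LJ J' u))))); [apply dd_terms_base; assumption|].
  apply eq_on_sym, pd_comm3; auto using smooth_on_pdI, smooth_on_LJ.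
Qed.

(** * Second derivatives in the cone *)

Lemma Rabs_solve_linear t c A B D : 0 < t -> Rabs c <= t -> t * A = B - c * D ->
  Rabs A <= Rabs B / t + Rabs D.
Proof.
  intros ht hc hE.
  assert (hA : A = (B - c * D) / t) by (rewrite <- hE; field; lra).
  assert (Rabs (B - c * D) <= Rabs B + t * Rabs D).
  { unfold Rminus; eapply Rle_trans; [apply Rabs_triang|].
    rewrite Rabs_Ropp, Rabs_mult; apply Rplus_le_compat_l, Rmult_le_compat_r;
      [apply Rabs_pos | exact hc]. }
  rewrite hA; unfold Rdiv; rewrite Rabs_mult, Rabs_inv, (Rabs_right t) by lra.
  apply Rle_trans with ((Rabs B + t * Rabs D) * / t).
  - apply Rmult_le_compat_r; [left; apply Rinv_0_lt_compat |]; lra.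
  - right; field; lra.
Qed.


Section SecondDerivatives.

Variables (v : fn) (t x y M : R).
Hypotheses (Hv : smooth_on V v) (Hpt : V t x y) (Ht : 0 < t)
  (Hcone : forall b, Rabs (coord b t x y) <= t)
  (HML : forall a b, Rabs (pd a (boost b v) t x y) <= M)
  (HM : forall a, Rabs (pd a v t x y) <= M).

(* t ∂_b = L_b - x^b ∂_t: a spatial derivative costs a factor 1/t against boosts. *)
Lemma spatial_pd_decay a b :
  Rabs (pd (idx_of b) (pd a v) t x y) <= 3 * M / t + Rabs (pd D0 (pd a v) t x y).
Proof.
  pose proof (pd_boost a b v Hv t x y Hpt) as E; unfold fadd, fscal in E.
  change (boost b (pd a v) t x y)
    with (coord b t x y * pd D0 (pd a v) t x y + t * pd (idx_of b) (pd a v) t x y) in E.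
  set (B := pd a (boost b v) t x y
            - (kron a (idx_of b) * pd D0 v t x y + kron a D0 * pd (idx_of b) v t x y)).
  assert (HB : Rabs B <= 3 * M).
  { unfold B; unfold Rminus; eapply Rle_trans; [apply Rabs_triang|].
    rewrite Rabs_Ropp; eapply Rle_trans; [apply Rplus_le_compat_l, Rabs_triang|].
    rewrite !Rabs_mult.
    pose proof (kron_abs a (idx_of b)); pose proof (kron_abs a D0).
    pose proof (Rabs_pos (pd D0 v t x y)); pose proof (Rabs_pos (pd (idx_of b) v t x y)).
    pose proof (HML a b); pose proof (HM D0); pose proof (HM (idx_of b)).
    pose proof (Rabs_pos (kron a (idx_of b))); pose proof (Rabs_pos (kron a D0)); nra. }
  assert (Rabs B / t <= 3 * M / t)
    by (unfold Rdiv; apply Rmult_le_compat_r; [left; apply Rinv_0_lt_compat |]; lra).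
  pose proof (Rabs_solve_linear t (coord b t x y) (pd (idx_of b) (pd a v) t x y) B
                (pd D0 (pd a v) t x y) Ht (Hcone b) ltac:(unfold B; lra)).
  lra.
Qed.

Lemma bound_nonneg : 0 <= M.
Proof. eapply Rle_trans; [apply Rabs_pos | apply (HM D0)]. Qed.

Lemma time_pd_decay d : Rabs (pd D0 (pd d v) t x y) <= Rabs (dtt v t x y) + 3 * M / t.
Proof.
  assert (0 <= 3 * M / t) by (pose proof bound_nonneg; apply Rdiv_le_0_compat; lra).
  destruct (idx3_cases d) as [-> | [b ->]]; [unfold dtt; lra|].
  rewrite (pd_comm _ _ v Hv t x y Hpt).
  pose proof (spatial_pd_decay D0 b); unfold dtt; lra.
Qed.

Lemma pd_pd_decay g d : Rabs (pd g (pd d v) t x y) <= Rabs (dtt v t x y) + 6 * M / t.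
Proof.
  assert (0 <= 3 * M / t) by (pose proof bound_nonneg; apply Rdiv_le_0_compat; lra).
  replace (6 * M / t) with (3 * M / t + 3 * M / t) by (field; lra).
  pose proof (time_pd_decay d).
  destruct (idx3_cases g) as [-> | [b ->]]; [lra|].
  pose proof (spatial_pd_decay d b); lra.
Qed.

End SecondDerivatives.

Lemma pd_applyZ_bound u K a N M t x y : smooth_on V u -> V t x y ->
  (length K <= N)%nat -> (numL K <= M)%nat ->
  Rabs (pd a (applyZ K u) t x y) <= 3 ^ length K * normd N M u t x y.
Proof.
  intros Hu h hN hM.
  apply (lincomb_bound (first_derivs u N M)); auto using normd_nonneg.
  - intros b [K' [a' [hK [hL ->]]]]; apply normd_ge; assumption.
  - apply (lincomb_incl (first_derivs u (length K) (numL K))); [|apply pd_applyZ_lincomb; auto].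
    intros b; apply first_derivs_mono; assumption.
Qed.

Lemma pd_pd_applyZ_decay u K g d N M t x y : smooth_on V u -> V t x y -> 0 < t ->
  (forall b, Rabs (coord b t x y) <= t) ->
  (S (length K) <= N)%nat -> (S (numL K) <= M)%nat ->
  Rabs (pd g (pd d (applyZ K u)) t x y)
    <= Rabs (dtt (applyZ K u) t x y) + 6 * (3 ^ N * normd N M u t x y) / t.
Proof.
  intros Hu h ht hc hN hM.
  pose proof (normd_nonneg N M u t x y).
  apply pd_pd_decay; auto using smooth_on_applyZ.
  - intros a b; change (boost b (applyZ K u)) with (applyZ (ZL b :: K) u).
    eapply Rle_trans; [apply (pd_applyZ_bound u (ZL b :: K) a N M); auto|].
    apply Rmult_le_compat_r; [assumption | apply Rle_pow; [lra | assumption]].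
  - intros a; eapply Rle_trans; [apply (pd_applyZ_bound u K a N M); auto; lia|].
    apply Rmult_le_compat_r; [assumption | apply Rle_pow; [lra | lia]].
Qed.

(** * The commutator estimate *)

Lemma comm_weights_le s q it hb R1 R2 R3 ND A B :
  1 <= s -> 1 <= q -> 0 <= it -> 0 <= hb -> 0 <= R1 -> 0 <= R2 -> 0 <= ND ->
  A <= s * (R1 + q * (R1 + 6 * (s * R3) * it)) ->
  B <= hb * (q * (R2 + 6 * (s * ND) * it)) ->
  A + B <= 6 * s * s * q * R1 + 6 * s * s * q * hb * R2
           + 6 * s * s * q * it * R3 + 6 * s * s * q * it * hb * ND.
Proof.
  intros hs hq hit hhb h1 h2 hN HA HB.
  assert (hsq : s <= s * q) by nra.
  assert (hssq : s * q <= s * s * q).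
  { replace (s * s * q) with (s * q * s) by ring; pose proof (Rmult_le_pos s q); nra. }
  assert ((s + s * q) * R1 <= 6 * s * s * q * R1) by (apply Rmult_le_compat_r; lra).
  assert (q * (hb * R2) <= 6 * s * s * q * (hb * R2))
    by (apply Rmult_le_compat_r; [apply Rmult_le_pos; assumption | nra]).
  assert (6 * q * s * (it * hb * ND) <= 6 * s * s * q * (it * hb * ND))
    by (apply Rmult_le_compat_r; [repeat apply Rmult_le_pos | nra]; lra).
  nra.
Qed.


Section CommutatorBound.

Variables (u Hb : fn) (I : list idx3) (J : list idx2) (t x y : R).
Hypotheses (Hu : smooth_on V u) (HHb : smooth_on V Hb) (Hpt : V t x y) (Ht : 0 < t)
  (Hcone : forall b, Rabs (coord b t x y) <= t).

Let p := (length I + length J)%nat.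
Let k := length J.
Let R1 := rhs1 I J Hb u t x y.
Let R2 := rhs2 I J u t x y.
Let R3 := rhs3 p k Hb u t x y.
Let ND := normd p k u t x y.

Lemma dd_terms_bound b : dd_terms u I k b -> Rabs (b t x y) <= R2 + 6 * (3 ^ p * ND) / t.
Proof.
  intros [g [d [J' [hJ ->]]]]; rewrite <- applyZ_IJ.
  eapply Rle_trans;
    [apply (pd_pd_applyZ_decay u _ g d p k); auto; unfold p, k in *; rewrite ?length_IJ, ?numL_IJ; lia|].
  rewrite applyZ_IJ; apply Rplus_le_compat_r, rhs2_ge; assumption.
Qed.

Lemma leibniz_dd_term_bound (I1 I2 : list idx3) (J1 J2 : list idx2) b :
  (length I1 + length I2 <= length I)%nat -> (length J1 + length J2 <= length J)%nat ->
  (1 <= length I2 + length J2)%nat -> dd_terms u I1 (length J1) b ->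
  Rabs (pdI I2 (LJ J2 Hb) t x y) * Rabs (b t x y) <= R1 + 6 * (3 ^ p * R3) / t.
Proof.
  intros hI hJ hne [g [d [J' [hJ' ->]]]].
  set (N := (length I1 + length J1 + 1)%nat); set (M := (length J1 + 1)%nat).
  set (a := Rabs (pdI I2 (LJ J2 Hb) t x y)).
  assert (ha : 0 <= a) by apply Rabs_pos.
  assert (HN : 0 <= normd N M u t x y) by apply normd_nonneg.
  assert (Hdecay : Rabs (pd g (pd d (pdI I1 (LJ J' u))) t x y)
                   <= Rabs (dtt (pdI I1 (LJ J' u)) t x y) + 6 * (3 ^ N * normd N M u t x y) / t).
  { rewrite <- !applyZ_IJ; apply (pd_pd_applyZ_decay u _ g d N M); auto;
      unfold N, M; rewrite ?length_IJ, ?numL_IJ; lia. }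
  assert (H1 : a * Rabs (dtt (pdI I1 (LJ J' u)) t x y) <= R1) by (apply rhs1_ge; lia).
  assert (H3 : a * normd N M u t x y <= R3).
  { apply Rle_trans with (normpk (length I2 + length J2) (length J2) Hb t x y * normd N M u t x y).
    - apply Rmult_le_compat_r; [assumption|].
      unfold a; rewrite <- applyZ_IJ; apply normpk_ge; rewrite ?length_IJ, ?numL_IJ; lia.
    - apply rhs3_ge; unfold p, k; lia. }
  assert (HNp : 3 ^ N <= 3 ^ p) by (apply Rle_pow; [lra | unfold N, p; lia]).
  assert (H3' : 3 ^ N * (a * normd N M u t x y) <= 3 ^ p * R3)
    by (apply Rmult_le_compat; [apply pow_le; lra | apply Rmult_le_pos | |]; assumption).
  assert (Hdiv : 6 * (3 ^ N * (a * normd N M u t x y)) / t <= 6 * (3 ^ p * R3) / t)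
    by (unfold Rdiv; apply Rmult_le_compat_r; [left; apply Rinv_0_lt_compat |]; lra).
  apply Rle_trans with (a * (Rabs (dtt (pdI I1 (LJ J' u)) t x y)
                             + 6 * (3 ^ N * normd N M u t x y) / t)).
  - apply Rmult_le_compat_l; assumption.
  - replace (a * (Rabs (dtt (pdI I1 (LJ J' u)) t x y) + 6 * (3 ^ N * normd N M u t x y) / t))
      with (a * Rabs (dtt (pdI I1 (LJ J' u)) t x y) + 6 * (3 ^ N * (a * normd N M u t x y)) / t)
      by (field; lra).
    lra.
Qed.

Lemma leibniz_term_bound b : leibniz_terms Hb (dtt u) (map Zd I ++ map ZL J) b ->
  Rabs (b t x y) <= R1 + 9 ^ k * (R1 + 6 * (3 ^ p * R3) / t).
Proof.
  intros [A [B [hs [hA ->]]]].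
  destruct (shuffle_IJ I J A B hs) as [I1 [I2 [J1 [J2 [-> [-> [l1 l2]]]]]]].
  assert (hne : (1 <= length I2 + length J2)%nat)
    by (destruct I2, J2; simpl; try lia; contradiction).
  rewrite !applyZ_IJ; set (hf := pdI I2 (LJ J2 Hb)).
  set (M' := R1 + 6 * (3 ^ p * R3) / t).
  assert (HM' : 0 <= M').
  { assert (0 <= R1) by apply rhs1_nonneg; assert (0 <= R3) by apply rhs3_nonneg.
    assert (0 <= 3 ^ p) by (apply pow_le; lra).
    unfold M'; apply Rplus_le_le_0_compat; [assumption|].
    apply Rdiv_le_0_compat; [apply Rmult_le_pos; [lra | apply Rmult_le_pos] | ]; lra. }
  assert (Hmain : Rabs (hf t x y) * Rabs (dtt (pdI I1 (LJ J1 u)) t x y) <= R1)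
    by (apply rhs1_ge; lia).
  assert (Hcomm : Rabs (fmul hf (fsub (pdI I1 (LJ J1 (dtt u))) (dtt (pdI I1 (LJ J1 u)))) t x y)
                  <= 9 ^ length J1 * M').
  { apply (lincomb_bound (fun hb => exists b, dd_terms u I1 (length J1) b /\ hb = fmul hf b));
      auto.
    - intros hb [b [hb' ->]]; unfold fmul; rewrite Rabs_mult.
      apply (leibniz_dd_term_bound I1 I2 J1 J2); auto; lia.
    - apply lincomb_mul_l, pdI_LJ_dtt_lincomb; assumption. }
  assert (9 ^ length J1 * M' <= 9 ^ k * M')
    by (apply Rmult_le_compat_r; [assumption | apply Rle_pow; [lra | unfold k; lia]]).
  unfold fmul, fsub in *; rewrite Rabs_mult in *.
  replace (pdI I1 (LJ J1 (dtt u)) t x y)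
    with (dtt (pdI I1 (LJ J1 u)) t x y
          + (pdI I1 (LJ J1 (dtt u)) t x y - dtt (pdI I1 (LJ J1 u)) t x y)) by ring.
  eapply Rle_trans; [apply Rmult_le_compat_l; [apply Rabs_pos | apply Rabs_triang]|].
  rewrite Rmult_plus_distr_l; fold M'; lra.
Qed.

Lemma decay_sum_nonneg a c s : 0 <= a -> 0 <= c -> 0 <= s -> 0 <= a + 6 * (s * c) / t.
Proof.
  intros ha hc hs; apply Rplus_le_le_0_compat; [exact ha|].
  apply Rdiv_le_0_compat; [apply Rmult_le_pos; [lra | apply Rmult_le_pos] | ]; assumption.
Qed.

Lemma leibniz_part_bound :
  Rabs (fsub (pdI I (LJ J (fmul Hb (dtt u)))) (fmul Hb (pdI I (LJ J (dtt u)))) t x y)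
  <= 3 ^ p * (R1 + 9 ^ k * (R1 + 6 * (3 ^ p * R3) / t)).
Proof.
  rewrite <- !applyZ_IJ.
  apply (lincomb_bound (leibniz_terms Hb (dtt u) (map Zd I ++ map ZL J))); auto.
  - pose proof (rhs1_nonneg I J Hb u t x y).
    apply Rplus_le_le_0_compat; [assumption|].
    apply Rmult_le_pos; [apply pow_le; lra|].
    apply decay_sum_nonneg; [assumption | apply rhs3_nonneg | apply pow_le; lra].
  - apply leibniz_term_bound.
  - unfold p; rewrite <- length_IJ; apply applyZ_mul_lincomb; auto using smooth_on_dtt.
Qed.

Lemma dtt_part_bound :
  Rabs (fsub (pdI I (LJ J (dtt u))) (dtt (pdI I (LJ J u))) t x y)
  <= 9 ^ k * (R2 + 6 * (3 ^ p * ND) / t).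
Proof.
  apply (lincomb_bound (dd_terms u I k)); auto.
  - apply decay_sum_nonneg; [apply rhs2_nonneg | apply normd_nonneg | apply pow_le; lra].
  - apply dd_terms_bound.
  - apply pdI_LJ_dtt_lincomb; assumption.
Qed.

Lemma comm_bound :
  Rabs (comm I J Hb u t x y)
  <= (6 * 3 ^ p * 3 ^ p * 9 ^ k) * R1
     + (6 * 3 ^ p * 3 ^ p * 9 ^ k) * Rabs (Hb t x y) * R2
     + (6 * 3 ^ p * 3 ^ p * 9 ^ k) * / t * R3
     + (6 * 3 ^ p * 3 ^ p * 9 ^ k) * / t * Rabs (Hb t x y) * ND.
Proof.
  assert (E : comm I J Hb u t x y =
    fsub (pdI I (LJ J (fmul Hb (dtt u)))) (fmul Hb (pdI I (LJ J (dtt u)))) t x y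
    + Hb t x y * fsub (pdI I (LJ J (dtt u))) (dtt (pdI I (LJ J u))) t x y).
  { unfold comm, fsub, fmul; ring. }
  pose proof leibniz_part_bound as T1; pose proof dtt_part_bound as T2.
  unfold Rdiv in T1, T2.
  rewrite E; eapply Rle_trans; [apply Rabs_triang|]; rewrite Rabs_mult.
  apply comm_weights_le;
    [ apply pow_R1_Rle; lra | apply pow_R1_Rle; lra | left; apply Rinv_0_lt_compat, Ht
    | apply Rabs_pos | apply rhs1_nonneg | apply rhs2_nonneg | apply normd_nonneg
    | exact T1 | apply Rmult_le_compat_l; [apply Rabs_pos | exact T2] ].
Qed.

End CommutatorBound.

Lemma smooth_on_Hbar00 H : (forall t x y, V t x y -> 0 < t) ->
  (forall a b, smooth_on V (H a b)) -> smooth_on V (Hbar00 H).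
Proof.
  intros Vpos HH.
  set (w1 := fmul (coord Defs.B1) frecip_time); set (w2 := fmul (coord Defs.B2) frecip_time).
  apply (smooth_on_ext
    (fadd (fadd (H D0 D0) (fscal (-2) (fadd (fmul w1 (H D1 D0)) (fmul w2 (H D2 D0)))))
          (fadd (fadd (fmul (fmul w1 w1) (H D1 D1)) (fmul (fmul w1 w2) (H D1 D2)))
                (fadd (fmul (fmul w2 w1) (H D2 D1)) (fmul (fmul w2 w2) (H D2 D2)))))).
  - intros t x y h; pose proof (Vpos t x y h).
    unfold Hbar00, w1, w2, fadd, fscal, fmul, frecip_time.
    cbn [sumR map flat_map all_idx2 fold_right app coord idx_of]; field; lra.
  - repeat first [apply smooth_on_add | apply smooth_on_scal | apply smooth_on_mul];
      auto using smooth_on_coord, smooth_on_recip_time.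
Qed.

End LocalCalculus.

Lemma open3_pos_time U : open3 U -> open3 (fun t x y => U t x y /\ 0 < t).
Proof.
  intros HU t x y [h ht]; destruct (HU t x y h) as [eps [heps Hnear]].
  exists (Rmin eps (t / 2)); split; [apply Rmin_glb_lt; lra|].
  intros t' x' y' h1 h2 h3; pose proof (Rmin_l eps (t / 2)); pose proof (Rmin_r eps (t / 2)).
  split; [apply Hnear; lra|]; apply Rabs_def2 in h1; lra.
Qed.

Lemma Rabs_le_rad x y : Rabs x <= rad x y /\ Rabs y <= rad x y.
Proof.
  unfold rad; rewrite <- (sqrt_pow2 (Rabs x)), <- (sqrt_pow2 (Rabs y)) by apply Rabs_pos.
  rewrite !pow2_abs; pose proof (pow2_ge_0 x); pose proof (pow2_ge_0 y).
  split; apply sqrt_le_1_alt; lra.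
Qed.

Lemma inK_cone s0 s1 t x y : inK s0 s1 t x y ->
  0 < t /\ forall b, Rabs (coord b t x y) <= t.
Proof.
  intros [hr _]; destruct (Rabs_le_rad x y) as [hx hy]; pose proof (sqrt_pos (x ^ 2 + y ^ 2)).
  fold (rad x y) in *; split; [lra | intros []; simpl; lra].
Qed.

Theorem lemma5p9 :
  forall (I : list idx3) (J : list idx2),
  exists C : R,
  forall (s0 s1 : R) (U : R -> R -> R -> Prop) (u : fn) (H : idx3 -> idx3 -> fn),
    open3 U ->
    (forall t x y, inK s0 s1 t x y -> U t x y) ->
    smooth_on U u ->
    (forall a b, smooth_on U (H a b)) ->
    (forall a b t x y, U t x y -> H a b t x y = H b a t x y) ->
    forall t x y, inK s0 s1 t x y ->
      let Hb := Hbar00 H in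
      let p := (length I + length J)%nat in
      let k := length J in
      Rabs (comm I J Hb u t x y)
      <= C * rhs1 I J Hb u t x y
         + C * Rabs (Hb t x y) * rhs2 I J u t x y
         + C * / t * rhs3 p k Hb u t x y
         + C * / t * Rabs (Hb t x y) * normd p k u t x y.
Proof.
  intros I J.
  exists (6 * 3 ^ (length I + length J) * 3 ^ (length I + length J) * 9 ^ length J).
  intros s0 s1 U u H HU HKU Hu HH _ t x y hK Hb p k.
  (* On t > 0 the weights x^a / t of [Hbar00] are smooth. *)
  set (V := fun t x y => U t x y /\ 0 < t).
  assert (VU : forall t x y, V t x y -> U t x y) by (intros ? ? ? []; assumption).
  assert (Vpos : forall t x y, V t x y -> 0 < t) by (intros ? ? ? []; assumption).
  destruct (inK_cone s0 s1 t x y hK) as [ht hcone].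
  apply (comm_bound V (open3_pos_time U HU)).
  - exact (smooth_on_mono U V u VU Hu).
  - apply smooth_on_Hbar00; [exact (open3_pos_time U HU) | exact Vpos |].
    intros a b; exact (smooth_on_mono U V _ VU (HH a b)).
  - split; [apply HKU, hK | exact ht].
  - exact ht.
  - exact hcone.
Qed.
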